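(* Let $K, L, N$ be positive integers. Consider the $K$-user SIMO broadcast channel with a single transmit antenna, $N$ antennas at each receiver, symbol extension factor $L$, and no CSIT, as described in the context. Then the maximum achievable SpAC is $\frac{L-K+1}{L}$.
   Context: Model: one single-antenna transmitter and $K$ receivers with $N$ antennas each. Over $L$ channel uses, receiver $i$ observes $\mathbf{y}_i=\mathbf{H}_{i,i}\sum_{j=1}^K\mathbf{Q}_j\mathbf{x}_j+\mathbf{n}_i\in\mathbb{C}^{NL}$, where $\mathbf{H}_{i,i}\in\mathbb{C}^{NL\times L}$ is block diagonal with $L$ diagonal blocks $\mathbf{h}_{i,i}(t)\in\mathbb{C}^{N\times 1}$, $\mathbf{x}_j\in\mathbb{C}^d$ is the finite-alphabet symbol vector for receiver $j$, $\mathbf{Q}_j\in\mathbb{C}^{L\times d}$ its precoder (rank $d$), and $\mathbf{n}_i$ Gaussian noise. No CSIT: the precoders are fixed and independent of the channel coefficients. At receiver $i$, the desired subspace is $\mathcal{S}_i=\mathrm{span}(\mathbf{H}_{i,i}\mathbf{Q}_i)$ and the interference subspace is $\mathcal{I}_i=\sum_{j\ne i}\mathrm{span}(\mathbf{H}_{i,i}\mathbf{Q}_j)$. A value $d$ is achievable if there exist channel-independent precoders such that, for almost every realization of the channel coefficients, $\mathcal{S}_i\not\subseteq\mathcal{I}_i$ for every receiver $i$. The SpAC is $d/L$, and the maximum achievable SpAC is the maximum of $d/L$ over achievable $d$. *)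

From HB Require Import structures.
From mathcomp Require Import all_boot all_order all_algebra.
From mathcomp Require Import reals.
From mathcomp Require Import complex.
Set Implicit Arguments.
Unset Strict Implicit.
Unset Printing Implicit Defensive.
Import Order.TTheory GRing.Theory Num.Theory.
Local Open Scope ring_scope.

(* Lebesgue-null subsets of C^I (I a finite index set), C^I identified with
   R^(2|I|) via real and imaginary parts: for every e > 0 the set can be
   covered by countably many closed boxes of total volume at most e. *)
Definition cnull (R : realType) (I : finType) (A : (I -> R[i]) -> Prop) : Prop :=
  forall e : R, 0 < e ->
  exists a b c d : nat -> I -> R,
    (forall n i, a n i <= b n i /\ c n i <= d n i) /\
    (forall g, A g -> exists n, forall i,
        (a n i <= complex.Re (g i) <= b n i) && (c n i <= complex.Im (g i) <= d n i)) /\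
    (forall m, \sum_(n < m) \prod_(i : I) ((b n i - a n i) * (d n i - c n i)) <= e).

(* Block-diagonal channel matrix H_{i,i} in C^{NL x L}: its t-th column is
   zero except for the block of rows t*N, ..., t*N + N - 1, which holds
   h(t) in C^N (row index t*N + n  <->  (t, n), via mxvec). *)
Definition chan_mx (R : realType) (L N : nat) (h : 'I_L -> 'cV[R[i]]_N)
  : 'M[R[i]]_(L * N, L) :=
  (\matrix_(c < L) mxvec (\matrix_(t < L, n < N) ((t == c)%:R * h c n 0)))^T.

(* The channel realization: coefficients g (i, t, n) = (h_{i,i}(t))_n. *)
Definition chan_of (R : realType) (K L N : nat)
  (g : 'I_K * 'I_L * 'I_N -> R[i]) (i : 'I_K) (t : 'I_L) : 'cV[R[i]]_N :=
  \col_(n < N) g (i, t, n).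

(* Column space of H Q_i is contained in the sum of the column spaces of
   H Q_j, j <> i (column spaces = row spaces of the transposes). *)
Definition desired_in_interf (R : realType) (K L N d : nat)
  (Q : 'I_K -> 'M[R[i]]_(L, d)) (g : 'I_K * 'I_L * 'I_N -> R[i]) (i : 'I_K)
  : bool :=
  let H := chan_mx (chan_of g i) in
  ((H *m Q i)^T <= \sum_(j | j != i) <<(H *m Q j)^T>>)%MS.

Definition achievable (R : realType) (K L N d : nat) : Prop :=
  exists Q : 'I_K -> 'M[R[i]]_(L, d),
    (forall j, \rank (Q j) = d) /\
    cnull (fun g : 'I_K * 'I_L * 'I_N -> R[i] =>
             exists i, desired_in_interf Q g i).

(* Converse: if the row space of Q_i^T lay in the sum of those of the other
   Q_j^T, then S_i would lie in I_i for every channel, and the whole channel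
   space is not null since the unit cube cannot be covered by boxes of total
   volume < 1.  So no Q_i^T is redundant, the partial sums of their row spaces
   have K strictly increasing ranks starting at d, and d + K - 1 <= L.
   Achievability: all users share L - K time slots and each user gets one
   private slot.  A nonzero channel coefficient on the private slot of user i
   separates S_i from I_i, so the bad channels lie in a union of coordinate
   hyperplanes, which is null. *)

From HB Require Import structures.
From mathcomp Require Import all_boot all_order all_algebra.
From mathcomp Require Import reals complex.
From mathcomp Require Import classical_sets functions boolp ereal sequences.
From mathcomp Require Import measure normedtype numfun lebesgue_measure.
From mathcomp Require Import measurable_realfun lebesgue_integral lra zify.
Import Order.TTheory GRing.Theory Num.Theory.
Local Open Scope ring_scope.

Section NullSets.
Local Set Implicit Arguments.
Local Unset Strict Implicit.
Variable R : realType.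

Definition box_volume k (lo hi : 'I_k -> R) : R :=
  \prod_(j < k) Num.max 0 (hi j - lo j).

Lemma box_volume_ge0 k (lo hi : 'I_k -> R) : 0 <= box_volume lo hi.
Proof. by apply: prodr_ge0 => j _; rewrite le_max lexx. Qed.

Lemma box_volume_lift k (lo hi : 'I_k.+1 -> R) :
  box_volume lo hi = box_volume (lo \o lift ord_max) (hi \o lift ord_max)
                     * Num.max 0 (hi ord_max - lo ord_max).
Proof.
rewrite /box_volume big_ord_recr /=; congr (_ * _).
apply: eq_bigr => j _; congr (Num.max 0 (hi _ - lo _));
by apply: val_inj; rewrite /= /bump leqNgt ltn_ord.
Qed.

Definition covers_unit_cube k (P : pred nat) (lo hi : nat -> 'I_k -> R) :=
  forall x : 'I_k -> R, (forall j, 0 <= x j <= 1) ->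
  exists2 n, P n & forall j, lo n j <= x j <= hi n j.

Lemma covers_unit_cube_slice k (P : pred nat) (lo hi : nat -> 'I_k.+1 -> R) (x : R) :
  0 <= x <= 1 -> covers_unit_cube P lo hi ->
  covers_unit_cube (fun n => P n && (lo n ord_max <= x <= hi n ord_max))
    (fun n => lo n \o lift ord_max) (fun n => hi n \o lift ord_max).
Proof.
move=> x01 cover y y01.
pose z j := if unlift ord_max j is Some j' then y j' else x.
have [|n Pn zn] := cover z.
  by move=> j; rewrite /z; case: unliftP => [j'|] _; [exact: y01|].
exists n; first by rewrite Pn; have := zn ord_max; rewrite /z unlift_none.
by move=> j; have := zn (lift ord_max j); rewrite /z liftK.
Qed.

Definition split_fun m n (f : 'I_m -> R) (g : 'I_n -> R) (j : 'I_(m + n)) : R :=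
  match fintype.split j with inl p => f p | inr p => g p end.

Lemma box_volume_split m n (a b : 'I_m -> R) (c d : 'I_n -> R) :
  box_volume (split_fun a c) (split_fun b d) = box_volume a b * box_volume c d.
Proof.
rewrite /box_volume big_split_ord /split_fun /=.
by congr (_ * _); apply: eq_bigr => i _; rewrite ?(unsplitK (inl i)) ?(unsplitK (inr i)).
Qed.

Lemma box_volume_enum (I : finType) (a b : I -> R) : (forall i, a i <= b i) ->
  box_volume (a \o enum_val (A := I)) (b \o enum_val (A := I))
  = \prod_(i : I) (b i - a i).
Proof.
move=> ab; rewrite /box_volume.
transitivity (\prod_(i in I) Num.max 0 (b i - a i)); first by rewrite [RHS]big_enum_val.
apply: eq_big => [i|i _]; first by rewrite inE.
by rewrite max_r // subr_ge0.
Qed.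

Lemma cnullS (I : finType) (A B : (I -> R[i]) -> Prop) :
  (forall g, A g -> B g) -> cnull B -> cnull A.
Proof.
move=> AB nullB e e0; have [a [b [c [d [ab [cover vol]]]]]] := nullB e e0.
by exists a, b, c, d; split => //; split => // g /AB; exact: cover.
Qed.

Lemma Re_Im_nat_bound (I : finType) (g : I -> R[i]) :
  exists s : nat, forall q, `|complex.Re (g q)| <= s%:R /\ `|complex.Im (g q)| <= s%:R.
Proof.
pose B := \sum_q (`|complex.Re (g q)| + `|complex.Im (g q)|).
have B0 : 0 <= B by apply: sumr_ge0 => q _; rewrite addr_ge0.
exists (Num.Def.archi_bound B) => q.
have := archi_boundP B0; have : `|complex.Re (g q)| + `|complex.Im (g q)| <= B.
  by rewrite /B (bigD1 q) //= lerDl sumr_ge0 // => p _; rewrite addr_ge0.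
by have := normr_ge0 (complex.Re (g q)); have := normr_ge0 (complex.Im (g q)); lra.
Qed.

(* The n-th box flattens coordinate [n %% #|I|] to the point 0 and has side
   [n %/ #|I|] in all other coordinates, so it has volume 0. *)
Lemma cnull_coord_zero (I : finType) (q0 : I) :
  cnull (fun g : I -> R[i] => exists q, g q = 0).
Proof.
have I0 : (0 < #|I|)%N by apply/card_gt0P; exists q0.
pose flat n : I := enum_val (Ordinal (ltn_pmod n I0)).
pose lo n q : R := if q == flat n then 0 else - (n %/ #|I|)%:R.
pose hi n q : R := if q == flat n then 0 else (n %/ #|I|)%:R.
move=> e e0; exists lo, hi, lo, hi; split; [|split].
- move=> n q; rewrite /lo /hi; case: ifP => // _.
  by have := ler0n R (n %/ #|I|); split; lra.
- move=> g [q gq]; have [s gs] := Re_Im_nat_bound g.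
  exists (s * #|I| + enum_rank q)%N => p; rewrite /lo /hi.
  have -> : flat (s * #|I| + enum_rank q)%N = q.
    rewrite /flat -[q in RHS]enum_rankK; congr enum_val.
    by apply: val_inj; rewrite /= modnMDl modn_small.
  rewrite divnMDl // divn_small // addn0.
  case: eqP => [->|_]; first by rewrite gq /= lexx.
  by have [] := gs p; rewrite -!ler_norml => -> ->.
- move=> m; rewrite big1 ?ltW // => n _.
  by rewrite (bigD1 (flat n)) //= /lo /hi eqxx subrr !mul0r.
Qed.

Local Open Scope ereal_scope.

Lemma nneseries_ge_term (u : (\bar R)^nat) n : (forall m, 0 <= u m) ->
  u n <= \sum_(m <oo) u m.
Proof.
move=> u0; rewrite (@nneseriesD1 _ u n xpredT) // leeDl //.
by apply: nneseries_ge0 => m _ _; exact: u0.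
Qed.

Lemma nneseries_le_partial (u : (\bar R)^nat) (x : \bar R) :
  (forall m, 0 <= u m) -> (forall m, \sum_(n < m) u n <= x) ->
  \sum_(n <oo) u n <= x.
Proof.
move=> u0 hu; apply: lime_le; first exact: is_cvg_nneseries.
by apply: nearW => m; rewrite big_mkord; exact: hu.
Qed.

Lemma integral_unit_itv_indic_le (c l h : R) : (0 <= c)%R ->
  \int[lebesgue_measure]_(x in `[0%R, 1%R]) (c * \1_(`[l, h] : set R) x)%:E
  <= (c * Num.max 0 (h - l))%:E.
Proof.
move=> c0.
rewrite (@integralZl_indic _ _ _ lebesgue_measure `[0%R, 1%R]%classic
  (measurable_itv _) (fun _ => `[l, h]%classic) c); last 2 first.
- by move=> /lt_le_trans/(_ c0); rewrite ltxx.
- exact: measurable_itv.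
rewrite integral_indic ?EFinM; [|exact: measurable_itv|exact: measurable_itv].
apply: lee_pmul; rewrite ?lee_fin //.
apply: le_trans (measureIl lebesgue_measure (measurable_itv `[l, h])
  (measurable_itv `[0%R, 1%R])) _.
have := @lebesgue_measure_itv R `[l, h]; rewrite /= => ->.
case: ifPn => _; last by rewrite lee_fin le_max lexx.
by rewrite -EFinD lee_fin le_max lexx orbT.
Qed.

Lemma unit_cube_cover_volume k (P : pred nat) (lo hi : nat -> 'I_k -> R) :
  covers_unit_cube P lo hi ->
  1 <= \sum_(n <oo) ((P n)%:R * box_volume (lo n) (hi n))%:E.
Proof.
elim: k P lo hi => [|k IH] P lo hi cover.
  have [|n Pn _] := cover (fun _ => 0%R); first by case.
  apply: le_trans (nneseries_ge_term n _).
    by rewrite Pn /box_volume big_ord0 mulr1.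
  by move=> m; rewrite lee_fin mulr_ge0 ?box_volume_ge0.
pose lo' n := lo n \o lift ord_max; pose hi' n := hi n \o lift ord_max.
pose I n : set R := `[lo n ord_max, hi n ord_max]%classic.
pose w n := ((P n)%:R * box_volume (lo' n) (hi' n))%R.
have w0 n : (0 <= w n)%R by rewrite mulr_ge0 ?box_volume_ge0.
pose F n x := (w n * \1_(I n) x)%:E.
have F0 n x : 0 <= F n x by rewrite lee_fin mulr_ge0.
pose D : set R := `[0%R, 1%R]%classic.
have mD : measurable D := measurable_itv _.
have mF n : measurable_fun D (F n).
  apply: (proj2 (measurable_EFinP _ (fun x => w n * \1_(I n) x)%R)).
  apply: (@measurable_funM _ _ _ _ (cst (w n)) (\1_(I n))); first exact: measurable_cst.
  by apply: measurable_indic; exact: measurable_itv.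
have slice_cover x : D x -> 1 <= \sum_(n <oo) F n x.
  rewrite /D /= in_itv /= => x01.
  apply: le_trans (IH _ _ _ (covers_unit_cube_slice x01 cover)) _.
  apply: lee_nneseries => n _; first by rewrite lee_fin mulr_ge0 ?box_volume_ge0.
  rewrite /F /w indicE.
  have -> : (x \in I n) = (lo n ord_max <= x <= hi n ord_max)%R.
    by apply/idP/idP; rewrite /I inE /= in_itv.
  by case: (P n); case: (lo n ord_max <= x <= hi n ord_max)%R;
    rewrite /= ?mul0r ?mul1r ?mulr1 ?mulr0.
have unit_itv_measure : \int[lebesgue_measure]_(x in D) (cst 1 x) = 1.
  rewrite integral_cst ?mul1e //.
  by have := @lebesgue_measure_itv R `[0%R, 1%R]; rewrite /= lte01 oppr0 adde0.
have mS : measurable_fun D (fun x => \sum_(n <oo) F n x).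
  exact: ge0_emeasurable_sum (fun n x _ _ => F0 n x) (fun n _ => mF n).
rewrite -unit_itv_measure.
apply: (@le_trans _ _ (\int[lebesgue_measure]_(x in D) \sum_(n <oo) F n x)).
  by apply: ge0_le_integral.
rewrite integral_nneseries //.
apply: lee_nneseries => n _; first by move=> _; apply: integral_ge0.
by rewrite box_volume_lift mulrA; apply: integral_unit_itv_indic_le.
Qed.

Lemma cnullT_false (I : finType) : ~ cnull (fun _ : I -> R[i] => True).
Proof.
move=> /(_ (1 / 2)%R) [|a [b [c [d [ab [cover vol]]]]]]; first by rewrite divr_gt0.
pose lo n := split_fun (a n \o enum_val (A := I)) (c n \o enum_val (A := I)).
pose hi n := split_fun (b n \o enum_val (A := I)) (d n \o enum_val (A := I)).
have vol_lohi n :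
    box_volume (lo n) (hi n) = (\prod_i ((b n i - a n i) * (d n i - c n i)))%R.
  rewrite box_volume_split !box_volume_enum -?big_split //= => i; by have [] := ab n i.
have /unit_cube_cover_volume : covers_unit_cube xpredT lo hi.
  move=> x x01.
  pose z i := Complex (x (lshift _ (enum_rank i))) (x (rshift _ (enum_rank i))).
  have [n zn] := cover z Logic.I.
  exists n => // j; rewrite /lo /hi /split_fun -(splitK j).
  by case: (fintype.split j) => p; rewrite unsplitK /=;
    have /andP[] := zn (enum_val p); rewrite /z /= enum_valK.
apply/negP; rewrite -ltNge; apply: le_lt_trans (_ : (1 / 2)%:E < 1); last first.
  by rewrite lte_fin; lra.
apply: nneseries_le_partial => m; first by rewrite lee_fin mulr_ge0 ?box_volume_ge0.
by rewrite sumEFin lee_fin; under eq_bigr do rewrite /= mul1r vol_lohi.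
Qed.
End NullSets.

Section Precoders.
Local Set Implicit Arguments.
Local Unset Strict Implicit.

Lemma mxrank_sum_irredundant (F : fieldType) (K m n : nat) (A : 'I_K.+1 -> 'M[F]_(m, n)) :
  (forall i, ~~ (A i <= \sum_(j | j != i) <<A j>>)%MS) ->
  (\rank (A ord0) + K <= \rank (\sum_j <<A j>>))%N.
Proof.
move=> irredundant.
pose S (k : nat) := (\sum_(j : 'I_K.+1 | (j <= k)%N) <<A j>>)%MS.
have sub_S (j : 'I_K.+1) k : (j <= k)%N -> (A j <= S k)%MS.
  by move=> jk; apply: (sumsmx_sup j); rewrite ?genmxE.
have rank_S k : (k <= K)%N -> (\rank (A ord0) + k <= \rank (S k))%N.
  elim: k => [_|k IH ltkK]; first by rewrite addn0 mxrankS // sub_S.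
  have S_sub : (S k <= S k.+1)%MS.
    by apply/sumsmx_subP => j jk; rewrite genmxE sub_S // leqW.
  have S_nsup : ~~ (S k.+1 <= S k)%MS.
    have ltk1 : (k.+1 < K.+1)%N by [].
    apply: contra (irredundant (Ordinal ltk1)) => sup.
    apply: submx_trans (sub_S (Ordinal ltk1) k.+1 (leqnn _)) _.
    apply: submx_trans sup _.
    apply/sumsmx_subP => j jk; apply: (sumsmx_sup j); rewrite ?genmxE //.
    by rewrite -val_eqE /= neq_ltn ltnS jk.
  have : (\rank (S k) < \rank (S k.+1))%N by rewrite rank_ltmx // ltmxE S_sub.
  have := IH (ltnW ltkK); lia.
have -> : (\sum_j <<A j>>)%MS = S K by apply: eq_bigl => j; rewrite -ltnS ltn_ord.
exact: rank_S.
Qed.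

Lemma desired_in_interf_of_precoders (R : realType) (K L N d : nat)
    (Q : 'I_K -> 'M[R[i]]_(L, d)) (g : 'I_K * 'I_L * 'I_N -> R[i]) (i : 'I_K) :
  ((Q i)^T <= \sum_(j | j != i) <<(Q j)^T>>)%MS -> desired_in_interf Q g i.
Proof.
move=> QiS; rewrite /desired_in_interf /= trmx_mul.
apply: submx_trans (submxMr _ QiS) _; rewrite sumsmxMr_gen; apply: sumsmxS => j _.
by rewrite !genmxE trmx_mul (eqmxMr _ (genmxE _)).
Qed.

Lemma achievable_le (R : realType) (K L N d : nat) :
  (0 < K)%N -> achievable R K L N d -> (d + K.-1 <= L)%N.
Proof.
case: K => // K _ [Q [rankQ nullQ]].
have [[i QiS] | redundant_free] :=
  pselect (exists i, ((Q i)^T <= \sum_(j | j != i) <<(Q j)^T>>)%MS).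
  apply: False_ind; apply: (cnullT_false (cnullS _ nullQ)) => g _.
  by exists i; exact: desired_in_interf_of_precoders.
have /mxrank_sum_irredundant : forall i, ~~ ((Q i)^T <= \sum_(j | j != i) <<(Q j)^T>>)%MS.
  by move=> i; apply/negP => QiS; apply: redundant_free; exists i.
by rewrite mxrank_tr rankQ => /leq_trans; apply; exact: rank_leq_col.
Qed.

(* Every user shares the unit vectors e_0, ..., e_(d-2) as its first d - 1
   columns; the last column of user j is its private unit vector e_(d-1+j). *)
Definition stair_index (d j c : nat) : nat := if (c < d - 1)%N then c else (d - 1 + j)%N.

Definition stair_precoder (F : fieldType) (K L d : nat) (j : 'I_K) : 'M[F]_(L, d) :=
  \matrix_(t, c) ((t : nat) == stair_index d j c)%:R.

Lemma rank_stair_precoder (F : fieldType) (K L d : nat) (j : 'I_K) :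
  (d - 1 + j < L)%N -> \rank (stair_precoder F L d j) = d.
Proof.
move=> jL.
have ltL (c : 'I_d) : (stair_index d j c < L)%N.
  by rewrite /stair_index; case: ifP; move: (ltn_ord c) jL; lia.
have inj (c c' : 'I_d) : (stair_index d j c == stair_index d j c') = (c == c').
  apply/eqP/eqP => [|-> //]; rewrite /stair_index => E; apply: ord_inj.
  move: E (ltn_ord c) (ltn_ord c') jL.
  by case: (ltnP c (d - 1)); case: (ltnP c' (d - 1)); lia.
have orthonormal : (stair_precoder F L d j)^T *m stair_precoder F L d j = 1%:M.
  apply/matrixP => c c'; rewrite !mxE (bigD1 (Ordinal (ltL c))) //= big1 ?addr0.
    by rewrite !mxE eqxx mul1r /= inj.
  move=> t tc; rewrite !mxE; case: eqP => [tc'|]; last by rewrite mul0r.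
  by move: tc; rewrite -val_eqE /= tc' eqxx.
apply/eqP; rewrite eqn_leq rank_leq_col -{1}(mxrank1 F d) -orthonormal.
exact: mxrankM_maxr.
Qed.

Lemma chan_mx_stair_precoderE (R : realType) (K L N d : nat) (h : 'I_L -> 'cV[R[i]]_N)
    (j : 'I_K) (t : 'I_L) (n : 'I_N) (c : 'I_d) :
  (chan_mx h *m stair_precoder _ L d j) (mxvec_index t n) c
  = h t n 0 * ((t : nat) == stair_index d j c)%:R.
Proof.
have chan_mxE t' : chan_mx h (mxvec_index t n) t' = (t == t')%:R * h t' n 0.
  by rewrite /chan_mx !mxE mxvecE mxE.
rewrite mxE (bigD1 t) //= big1 ?addr0; first by rewrite chan_mxE eqxx mul1r mxE.
by move=> t' t't; rewrite chan_mxE eq_sym (negbTE t't) !mul0r.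
Qed.

(* The private time slot d - 1 + i of user i is seen only by its own
   precoder, so a nonzero channel coefficient there separates S_i from I_i. *)
Lemma stair_precoder_interference_free (R : realType) (K L N d : nat)
    (g : 'I_K * 'I_L * 'I_N -> R[i]) (i : 'I_K) (t : 'I_L) (n : 'I_N) :
  (0 < d)%N -> (t : nat) = (d - 1 + i)%N -> g (i, t, n) != 0 ->
  ~~ desired_in_interf (stair_precoder _ L d) g i.
Proof.
move=> d0 ti gi0; apply/negP => interf.
pose v : 'cV[R[i]]_(L * N) := delta_mx (mxvec_index t n) 0.
have stair_at_slot j c : ((chan_mx (chan_of g i) *m stair_precoder _ L d j)^T *m v) c 0
    = g (i, t, n) * ((t : nat) == stair_index d j c)%:R.
  by rewrite -colE mxE mxE chan_mx_stair_precoderE mxE.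
have : ((chan_mx (chan_of g i) *m stair_precoder _ L d i)^T <= kermx v)%MS.
  apply: submx_trans interf _; apply/sumsmx_subP => j ji; rewrite genmxE.
  apply/sub_kermxP/matrixP => c z; rewrite ord1 stair_at_slot mxE.
  suff /negbTE -> : (t : nat) != stair_index d j c by rewrite mulr0.
  rewrite /stair_index ti; case: ltnP => [|_]; first by lia.
  by rewrite eqn_add2l val_eqE eq_sym.
have dlast : (d - 1 < d)%N by lia.
move/sub_kermxP/matrixP/(_ (Ordinal dlast) 0).
by rewrite stair_at_slot /stair_index ltnn ti eqxx mulr1 mxE; apply/eqP.
Qed.

Lemma achievable_stair (R : realType) (K L N : nat) :
  (0 < K)%N -> (0 < L)%N -> (0 < N)%N -> (K <= L)%N -> achievable R K L N (L - K + 1).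
Proof.
move=> K0 L0 N0 KL.
have private_slot (j : 'I_K) : (L - K + 1 - 1 + j < L)%N by move: (ltn_ord j); lia.
exists (stair_precoder _ L (L - K + 1)); split.
  by move=> j; exact: rank_stair_precoder.
apply: cnullS (cnull_coord_zero (Ordinal K0, Ordinal L0, Ordinal N0)) => g [i interf].
exists (i, Ordinal (private_slot i), Ordinal N0).
apply/eqP; apply: contraTT interf => gi0.
by apply: (stair_precoder_interference_free _ _ gi0); rewrite ?addn1.
Qed.
End Precoders.

Theorem corollary2 (R : realType) (K L N : nat) :
  (0 < K)%N -> (0 < L)%N -> (0 < N)%N -> (K <= L)%N ->
  (exists d : nat, achievable R K L N d /\
     d%:R / L%:R = ((L - K + 1)%N)%:R / L%:R :> R) /\
  (forall d : nat, achievable R K L N d ->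
     d%:R / L%:R <= ((L - K + 1)%N)%:R / L%:R :> R).
Proof.
move=> K0 L0 N0 KL; split.
  by exists (L - K + 1)%N; split => //; exact: achievable_stair.
move=> d /(achievable_le K0) dKL.
by rewrite ler_pM2r ?invr_gt0 ?ltr0n // ler_nat; lia.
Qed.
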